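(* Let $\mathcal{R}=\{R_1,\ldots,R_n\}$ be a family of axis-aligned rectangles in $\mathbb{R}^2$ such that the $2n$ $x$-coordinates of the vertical sides are pairwise distinct and the $2n$ $y$-coordinates of the horizontal sides are pairwise distinct. Let $a_1,\ldots,a_{2n}$ be its $x$-sequence and $b_1,\ldots,b_{2n}$ its $y$-sequence, and for each $i$ let $a(i)=(j_1,j_2)$ and $b(i)=(j_1',j_2')$. Then there exists a family of axis-aligned squares $\mathcal{S}=\{S_1,\ldots,S_n\}$ whose $x$-sequence equals that of $\mathcal{R}$ and whose $y$-sequence equals that of $\mathcal{R}$ if and only if the following linear program in the variables $x_1,\ldots,x_{2n-1},y_1,\ldots,y_{2n-1}$ is feasible: $$x_k\ge 1,\ y_k\ge 1 \ (k=1,\ldots,2n-1),\qquad \sum_{k=j_1}^{j_2-1}x_k=\sum_{k=j_1'}^{j_2'-1}y_k \ \text{ for every } i=1,\ldots,n, \text{ where } a(i)=(j_1,j_2),\ b(i)=(j_1',j_2').$$ Moreover, from a feasible solution one obtains such squares by setting $l(S_i)=\sum_{k=1}^{j_1-1}x_k$, $r(S_i)=\sum_{k=1}^{j_2-1}x_k$, $b(S_i)=\sum_{k=1}^{j_1'-1}y_k$, $t(S_i)=\sum_{k=1}^{j_2'-1}y_k$.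
   Context: For an axis-aligned rectangle $R$, $l(R),r(R)$ denote the $x$-coordinates of its left and right sides and $b(R),t(R)$ the $y$-coordinates of its bottom and top sides. For a family $\{R_1,\ldots,R_n\}$ of axis-aligned rectangles with pairwise distinct vertical-side $x$-coordinates, list the $2n$ values $l(R_i), r(R_i)$ in increasing order $a'_1<\cdots<a'_{2n}$ and replace each value $l(R_i)$ or $r(R_i)$ by the index $i$; the resulting sequence $a_1,\ldots,a_{2n}$ (in which each $i\in\{1,\ldots,n\}$ appears exactly twice) is the $x$-sequence, and $a(i)=(j_1,j_2)$ denotes the pair of positions $j_1<j_2$ with $a_{j_1}=a_{j_2}=i$. The $y$-sequence $b_1,\ldots,b_{2n}$ and the function $b(i)=(j_1',j_2')$ are defined analogously using the values $b(R_i),t(R_i)$. The same definitions apply to families of squares, which must then also have pairwise distinct such coordinates. *)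

From HB Require Import structures.
From mathcomp Require Import all_boot all_order all_algebra.
Set Implicit Arguments. Unset Strict Implicit. Unset Printing Implicit Defensive.
Import Order.TTheory GRing.Theory Num.Theory.
Local Open Scope ring_scope.

(* A family of n axis-parallel boxes is given by four coordinate maps
   lo hi (x-direction: l, r) and lo hi (y-direction: b, t) on 'I_n. *)
Definition coordv {R : realFieldType} {n : nat} (lo hi : 'I_n -> R)
  (p : 'I_n * bool) : R := if p.2 then hi p.1 else lo p.1.

Definition distinct_coords {R : realFieldType} {n : nat} (lo hi : 'I_n -> R) :=
  injective (coordv lo hi).

Definition side_seq {R : realFieldType} {n : nat} (lo hi : 'I_n -> R) : seq 'I_n :=
  [seq p.1 | p <- sort (fun p q => (coordv lo hi p <= coordv lo hi q)%R)
                       (enum {: 'I_n * bool})].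

(* a(i) = (pos1 s i, pos2 s i): the 1-based positions of the first and
   second occurrences of i in the sequence s. *)
Definition pos1 {n : nat} (s : seq 'I_n) (i : 'I_n) : nat := (index i s).+1.
Definition pos2 {n : nat} (s : seq 'I_n) (i : 'I_n) : nat :=
  ((index i s).+1 + (index i (drop (index i s).+1 s)).+1)%N.

Definition is_rect_family {R : realFieldType} {n : nat} (l r b t : 'I_n -> R) :=
  forall i, l i < r i /\ b i < t i.

Definition is_square_family {R : realFieldType} {n : nat} (l r b t : 'I_n -> R) :=
  forall i, l i < r i /\ b i < t i /\ r i - l i = t i - b i.

(* Feasibility of the LP in variables x_1..x_{2n-1}, y_1..y_{2n-1}
   (stored in x y : nat -> R; other values irrelevant), for the
   x-sequence a and y-sequence b. *)
Definition lp_solution {R : realFieldType} (n : nat) (a b : seq 'I_n)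
  (x y : nat -> R) : Prop :=
  (forall k : nat, (1 <= k <= (2 * n).-1)%N -> 1 <= x k /\ 1 <= y k) /\
  (forall i : 'I_n,
     \sum_(pos1 a i <= k < pos2 a i) x k = \sum_(pos1 b i <= k < pos2 b i) y k).

From HB Require Import structures.
From mathcomp Require Import all_boot all_order all_algebra zify.
Import Order.TTheory GRing.Theory Num.Theory.
Local Open Scope ring_scope.

(* Given squares, the gaps
   x_k = a'_(k+1) - a'_k between consecutive sorted coordinates are positive,
   the gaps spanned by a side add up to its length, and equal side lengths give
   the LP equations; dividing all gaps by the smallest one yields x_k, y_k >= 1.
   Conversely, prefix sums of positive numbers are strictly increasing, so
   putting the k-th endpoint at x_1 + ... + x_(k-1) preserves the ranking of the
   endpoints, hence the x- and y-sequences, and the LP equations say that the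
   new rectangles are squares. *)

Section SortEnum.
Context {disp : Order.disp_t} {T : finType} {R : orderType disp}.
Implicit Types (f g : T -> R) (p q : T).
Local Open Scope order_scope.

Definition sort_enum f := sort (fun p q => f p <= f q) (enum T).
Definition rank f p := index p (sort_enum f).

Lemma sort_enum_sorted f : sorted (fun p q => f p <= f q) (sort_enum f).
Proof. by apply: sort_sorted => p q; exact: le_total. Qed.

Lemma sort_enum_uniq f : uniq (sort_enum f).
Proof. by rewrite sort_uniq enum_uniq. Qed.

Lemma mem_sort_enum f p : p \in sort_enum f.
Proof. by rewrite mem_sort mem_enum. Qed.

Lemma size_sort_enum f : size (sort_enum f) = #|T|.
Proof. by rewrite size_sort cardE. Qed.

Lemma rank_lt_card f p : (rank f p < #|T|)%N.
Proof. by rewrite -(size_sort_enum f) index_mem mem_sort_enum. Qed.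

Section Injective.
Context {f : T -> R}.
Hypothesis f_inj : injective f.

Lemma leq_rank p q : (rank f p <= rank f q)%N = (f p <= f q).
Proof.
have le_of_rank p' q' : (rank f p' <= rank f q')%N -> f p' <= f q'.
  apply: (sorted_leq_index _ _ (sort_enum_sorted f)); rewrite ?mem_sort_enum //.
  by move=> ? ? ?; exact: le_trans.
apply/idP/idP => [|le_pq]; first exact: le_of_rank.
rewrite leqNgt; apply/negP => lt_qp.
have /f_inj eq_pq : f p = f q by apply/le_anti; rewrite le_pq le_of_rank // ltnW.
by rewrite eq_pq ltnn in lt_qp.
Qed.

Lemma ltn_rank p q : (rank f p < rank f q)%N = (f p < f q).
Proof. by rewrite ltnNge leq_rank ltNge. Qed.

Lemma sort_enum_eq {g} : (forall p q, (g p <= g q) = (f p <= f q)) ->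
  sort_enum g = sort_enum f.
Proof.
move=> le_gf; apply: (sorted_eq (leT := fun p q => f p <= f q)).
- by move=> p q r; exact: le_trans.
- by move=> p q /le_anti /f_inj.
- by rewrite -(eq_sorted (e := fun p q => g p <= g q)) ?sort_enum_sorted.
- exact: sort_enum_sorted.
- by rewrite perm_sort perm_sym perm_sort.
Qed.

End Injective.
End SortEnum.

Section Positions.
Variable n : nat.
Implicit Types (i : 'I_n) (u v w : seq 'I_n).

Lemma pos_cat {u v} w {i} : i \notin u -> i \notin v ->
  pos1 (u ++ i :: v ++ i :: w) i = (size u).+1 /\
  pos2 (u ++ i :: v ++ i :: w) i = (size u + size v).+2.
Proof.
move=> /negbTE iu /negbTE iv; rewrite /pos1 /pos2 index_cat iu /= eqxx addn0.
split=> //; rewrite -cat_rcons drop_size_cat ?size_rcons //.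
by rewrite index_cat iv /= eqxx addn0 addnS.
Qed.

Lemma notin_map_fst {s : seq ('I_n * bool)} {i} :
  (i, false) \notin s -> (i, true) \notin s -> i \notin map fst s.
Proof.
move=> ifs its; apply/mapP => -[[j c] jc /= eq_ij]; subst j.
by case: c jc => jc; [case/negP: its | case/negP: ifs].
Qed.

Lemma pos_map_fst (s : seq ('I_n * bool)) i : uniq s -> (i, true) \in s ->
  (index (i, false) s < index (i, true) s)%N ->
  pos1 (map fst s) i = (index (i, false) s).+1 /\
  pos2 (map fst s) i = (index (i, true) s).+1.
Proof.
move=> s_uniq it_s lt_ft.
have ifs : (i, false) \in s by rewrite -index_mem (ltn_trans lt_ft) ?index_mem.
move: s_uniq it_s lt_ft; case/splitPr: ifs => u v.
rewrite cat_uniq /= => /and3P[_ /norP[ifu _] /andP[ifv v_uniq]] it_uv.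
have [itu | itu] := boolP ((i, true) \in u).
  by rewrite !index_cat itu (negbTE ifu) /= eqxx addn0 ltnNge ltnW ?index_mem.
rewrite !index_cat (negbTE itu) (negbTE ifu) /= eqxx xpair_eqE andbF => _.
have itv : (i, true) \in v.
  by move: it_uv; rewrite mem_cat (negbTE itu) in_cons xpair_eqE andbF.
case/splitPr: itv ifv v_uniq => v1 v2.
rewrite mem_cat in_cons negb_or /= cat_uniq /= => /andP[ifv1 _] /and3P[_ /norP[itv1 _] _].
rewrite index_cat (negbTE itv1) /= eqxx map_cat /= map_cat /=.
have [-> ->] := pos_cat [seq p.1 | p <- v2] (notin_map_fst ifu itu) (notin_map_fst ifv1 itv1).
by rewrite !size_map !addn0 addnS.
Qed.

End Positions.

Lemma pos_side_seq {R : realFieldType} {n} {lo hi : 'I_n -> R} i :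
  distinct_coords lo hi -> lo i < hi i ->
  pos1 (side_seq lo hi) i = (rank (coordv lo hi) (i, false)).+1 /\
  pos2 (side_seq lo hi) i = (rank (coordv lo hi) (i, true)).+1.
Proof.
move=> dc lt_i; apply: pos_map_fst; rewrite ?sort_enum_uniq ?mem_sort_enum //.
by rewrite (ltn_rank dc).
Qed.

Section PrefixSums.
Context {R : numDomainType}.
Implicit Type x : nat -> R.

Definition psum x j := \sum_(1 <= k < j) x k.

Lemma psum_sub x a b : (1 <= a <= b)%N -> psum x b - psum x a = \sum_(a <= k < b) x k.
Proof. by case/andP=> a1 ab; rewrite /psum (big_cat_nat a1 ab) addrAC subrr add0r. Qed.

Lemma psum_mono {x N} : (forall k, (1 <= k < N)%N -> 0 < x k) ->
  {in [pred j | (1 <= j <= N)%N] &, {mono psum x : a b / (a <= b)%N >-> a <= b}}.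
Proof.
move=> x_gt0; apply: le_mono_in => a b /andP[a1 _] /andP[_ bN] ab.
have x_gt0' k : (a <= k < b)%N -> 0 < x k.
  by case/andP=> ak kb; rewrite x_gt0 // (leq_trans a1 ak) (leq_trans kb bN).
rewrite -subr_gt0 psum_sub; last by rewrite a1 ltnW.
rewrite big_ltn // ltr_pwDl ?x_gt0' ?leqnn // big_nat sumr_ge0 // => k.
by case/andP=> ak kb; rewrite ltW // x_gt0' // kb (ltnW ak).
Qed.

End PrefixSums.

Lemma card_endpoints n : #|{: 'I_n * bool}| = (2 * n)%N.
Proof. by rewrite card_prod card_ord card_bool mulnC. Qed.

Definition psum_lo {R : numDomainType} {n} (s : seq 'I_n) (x : nat -> R) i :=
  psum x (pos1 s i).
Definition psum_hi {R : numDomainType} {n} (s : seq 'I_n) (x : nat -> R) i :=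
  psum x (pos2 s i).

Section Realization.
Variables (R : realFieldType) (n : nat) (lo hi : 'I_n -> R) (x : nat -> R).
Hypotheses (lo_lt_hi : forall i, lo i < hi i) (lo_hi_distinct : distinct_coords lo hi).
Hypothesis x_gt0 : forall k, (1 <= k < 2 * n)%N -> 0 < x k.

Local Notation s := (side_seq lo hi).
Local Notation lo' := (psum_lo s x).
Local Notation hi' := (psum_hi s x).

Lemma coordv_psum p : coordv lo' hi' p = psum x (rank (coordv lo hi) p).+1.
Proof.
case: p => i c; have [pos1E pos2E] := pos_side_seq i lo_hi_distinct (lo_lt_hi i).
by case: c; rewrite /coordv /psum_lo /psum_hi /= ?pos1E ?pos2E.
Qed.

Lemma le_coordv_psum p q :
  (coordv lo' hi' p <= coordv lo' hi' q) = (coordv lo hi p <= coordv lo hi q).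
Proof.
have rank_bound r : (rank (coordv lo hi) r).+1 \in [pred j | (1 <= j <= 2 * n)%N].
  by rewrite inE ltnS -(card_endpoints n) rank_lt_card.
by rewrite !coordv_psum (psum_mono x_gt0) ?rank_bound // ltnS (leq_rank lo_hi_distinct).
Qed.

Lemma distinct_coords_psum : distinct_coords lo' hi'.
Proof. by move=> p q /eqP; rewrite eq_le !le_coordv_psum -eq_le => /eqP /lo_hi_distinct. Qed.

Lemma side_seq_psum : side_seq lo' hi' = s.
Proof. by rewrite /side_seq -/(sort_enum _) (sort_enum_eq lo_hi_distinct le_coordv_psum). Qed.

Lemma psum_lo_lt_hi i : lo' i < hi' i.
Proof.
have := le_coordv_psum (i, true) (i, false); rewrite /coordv /= => le_hi_lo.
by rewrite ltNge le_hi_lo -ltNge.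
Qed.

Lemma psum_hi_sub_lo i : hi' i - lo' i = \sum_(pos1 s i <= k < pos2 s i) x k.
Proof.
rewrite psum_sub //; have [-> ->] := pos_side_seq i lo_hi_distinct (lo_lt_hi i) => /=.
by rewrite ltnS (leq_rank lo_hi_distinct); exact/ltW/lo_lt_hi.
Qed.

End Realization.

Section SortedCoordinates.
Context {T : finType} {R : realDomainType}.
Implicit Types (f : T -> R) (p : T).

(* 1-based: [sorted_coord f k] is the paper's a'_k, the k-th smallest value. *)
Definition sorted_coord f k := nth 0 (map f (sort_enum f)) k.-1.

Lemma sorted_coord_rank f p : sorted_coord f (rank f p).+1 = f p.
Proof.
by rewrite /sorted_coord /= (nth_map p) ?nth_index ?index_mem ?mem_sort_enum.
Qed.

Lemma sorted_coord_lt f k : injective f -> (1 <= k < #|T|)%N ->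
  sorted_coord f k < sorted_coord f k.+1.
Proof.
move=> f_inj /andP[k1 kT].
have lt_sorted : sorted <%R (map f (sort_enum f)).
  by rewrite lt_sorted_uniq_le map_inj_uniq ?sort_enum_uniq // sorted_map sort_enum_sorted.
rewrite /sorted_coord (lt_sorted_ltn_nth 0 lt_sorted) ?inE ?size_map ?size_sort_enum //.
  by rewrite prednK.
exact: leq_ltn_trans (leq_pred k) kT.
Qed.

End SortedCoordinates.

Lemma ex_pos_lower_bound {R : realDomainType} {I : eqType} (s : seq I) (h : I -> R) :
  {in s, forall k, 0 < h k} -> exists2 m, 0 < m & {in s, forall k, m <= h k}.
Proof.
elim: s => [|k s IH] h_gt0; first by exists 1.
have [|m m_gt0 le_m] := IH; first by move=> j js; rewrite h_gt0 // in_cons js orbT.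
exists (Num.min m (h k)); first by rewrite lt_min m_gt0 h_gt0 ?mem_head.
by move=> j; rewrite in_cons => /predU1P[-> | /le_m js]; rewrite ge_min ?lexx ?orbT ?js.
Qed.

Lemma sum_gaps_side_seq (R : realFieldType) n (lo hi : 'I_n -> R) i :
  distinct_coords lo hi -> lo i < hi i ->
  let c := sorted_coord (coordv lo hi) in
  \sum_(pos1 (side_seq lo hi) i <= k < pos2 (side_seq lo hi) i) (c k.+1 - c k) = hi i - lo i.
Proof.
move=> dc lt_i c; have [-> ->] := pos_side_seq i dc lt_i.
rewrite telescope_sumr ?ltnS ?(leq_rank dc) ?ltW //.
by rewrite /c !sorted_coord_rank.
Qed.

Lemma square_family_lp_feasible (R : realFieldType) n (l r b t : 'I_n -> R) :
  is_square_family l r b t -> distinct_coords l r -> distinct_coords b t ->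
  exists x y : nat -> R, lp_solution (side_seq l r) (side_seq b t) x y.
Proof.
move=> sq dlr dbt.
pose gap (f : 'I_n * bool -> R) k := sorted_coord f k.+1 - sorted_coord f k.
have [m m_gt0 le_m] : exists2 m, 0 < m &
    {in iota 1 (2 * n).-1, forall k, m <= Num.min (gap (coordv l r) k) (gap (coordv b t) k)}.
  apply: ex_pos_lower_bound => k; rewrite mem_iota => /andP[k1 kn].
  have kT : (1 <= k < #|{: 'I_n * bool}|)%N by rewrite card_endpoints k1; lia.
  by rewrite lt_min !subr_gt0 !sorted_coord_lt.
exists (fun k => gap (coordv l r) k / m), (fun k => gap (coordv b t) k / m); split.
- move=> k /andP[k1 kn]; have : k \in iota 1 (2 * n).-1 by rewrite mem_iota k1; lia.
  by move/le_m; rewrite le_min !ler_pdivlMr // !mul1r => /andP[].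
- move=> i; have [lr [bt sq_i]] := sq i.
  by rewrite -!mulr_suml !sum_gaps_side_seq // sq_i.
Qed.

Lemma lp_solution_gt0 {R : realFieldType} {n} {a b : seq 'I_n} {x y : nat -> R} :
  lp_solution a b x y -> forall k, (1 <= k < 2 * n)%N -> 0 < x k /\ 0 < y k.
Proof.
case=> ge1 _ k /andP[k1 kn].
have [x1 y1] : 1 <= x k /\ 1 <= y k by apply: ge1; rewrite k1; lia.
by split; apply: lt_le_trans ltr01 _.
Qed.

Lemma lp_solution_squares (R : realFieldType) n (l r b t : 'I_n -> R) (x y : nat -> R) :
  is_rect_family l r b t -> distinct_coords l r -> distinct_coords b t ->
  lp_solution (side_seq l r) (side_seq b t) x y ->
  let l' := psum_lo (side_seq l r) x in let r' := psum_hi (side_seq l r) x in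
  let b' := psum_lo (side_seq b t) y in let t' := psum_hi (side_seq b t) y in
  [/\ is_square_family l' r' b' t', distinct_coords l' r', distinct_coords b' t',
      side_seq l' r' = side_seq l r & side_seq b' t' = side_seq b t].
Proof.
move=> rect dlr dbt lp l' r' b' t'.
have x_gt0 k kn := proj1 (lp_solution_gt0 lp k kn).
have y_gt0 k kn := proj2 (lp_solution_gt0 lp k kn).
have l_lt_r i := proj1 (rect i); have b_lt_t i := proj2 (rect i).
split; try exact: distinct_coords_psum; try exact: side_seq_psum.
move=> i; rewrite !psum_lo_lt_hi //; split=> //; split=> //.
by rewrite !psum_hi_sub_lo //; case: lp => _ ->.
Qed.

Theorem mainTheorem3 (R : realFieldType) (n : nat) (l r b t : 'I_n -> R) :
  is_rect_family l r b t ->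
  distinct_coords l r -> distinct_coords b t ->
  ((exists l' r' b' t' : 'I_n -> R,
      [/\ is_square_family l' r' b' t',
          distinct_coords l' r', distinct_coords b' t',
          side_seq l' r' = side_seq l r & side_seq b' t' = side_seq b t])
   <-> (exists x y : nat -> R, lp_solution (side_seq l r) (side_seq b t) x y))
  /\
  (forall x y : nat -> R, lp_solution (side_seq l r) (side_seq b t) x y ->
     let l' := fun i => \sum_(1 <= k < pos1 (side_seq l r) i) x k in
     let r' := fun i => \sum_(1 <= k < pos2 (side_seq l r) i) x k in
     let b' := fun i => \sum_(1 <= k < pos1 (side_seq b t) i) y k in
     let t' := fun i => \sum_(1 <= k < pos2 (side_seq b t) i) y k in
     [/\ is_square_family l' r' b' t',
         distinct_coords l' r', distinct_coords b' t',
         side_seq l' r' = side_seq l r & side_seq b' t' = side_seq b t]).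
Proof.
move=> rect dlr dbt.
have squares x y := @lp_solution_squares R n l r b t x y rect dlr dbt.
split; last exact: squares.
split=> [[l' [r' [b' [t' [sq dlr' dbt' <- <-]]]]] | [x [y /squares sq]]].
  exact: square_family_lp_feasible.
by exists (psum_lo (side_seq l r) x), (psum_hi (side_seq l r) x),
  (psum_lo (side_seq b t) y), (psum_hi (side_seq b t) y).
Qed.
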